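(* For stochastic CA $\mathcal{A}_1,\mathcal{A}_2$: if $\mathcal{A}_1\sqsubseteq^S_i\mathcal{A}_2$ then $\mathcal{A}_1\sqsubseteq^N_i\mathcal{A}_2$; if $\mathcal{A}_1\sqsubseteq^S_\pi\mathcal{A}_2$ then $\mathcal{A}_1\sqsubseteq^N_\pi\mathcal{A}_2$; and if $\mathcal{A}_1\sqsubseteq^S_m\mathcal{A}_2$ then $\mathcal{A}_1\sqsubseteq^N_m\mathcal{A}_2$.
   Context: A stochastic CA is $(Q,R,V,V',f)$ with $Q$ finite states, $R$ finite random symbols, $V=\{v_1,\dots,v_r\}$, $V'=\{v'_1,\dots,v'_{r'}\}$ finite subsets of $\mathbb{Z}$, $f:Q^r\times R^{r'}\to Q$; explicit global function $F(c,s)_z=f((c_{z+v_1},\dots,c_{z+v_r}),(s_{z+v'_1},\dots,s_{z+v'_{r'}}))$. Non-deterministic global function $N_F(c)=\{F(c,s):s\in R^{\mathbb{Z}}\}$; stochastic global function $S_F(c)$ = law of $F(c,s)$ for $s$ distributed by the uniform Bernoulli measure on $R^{\mathbb{Z}}$. Iterates: $F^0(c)=c$, $F^{t+1}(c,s^1,\dots,s^{t+1})=F(F^t(c,s^1,\dots,s^t),s^{t+1})$. Restriction: for injective $i:Q'\to Q$ with $Y=i(Q')^{\mathbb{Z}}$ satisfying $F(Y,R^{\mathbb{Z}})\subseteq Y$, the $i$-restriction has states $Q'$, random symbols $R$, explicit global function $I^{-1}(F(I(c),s))$ ($I$ the cellwise extension of $i$). Projection: for surjective $\pi:Q\to Q'$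 with cellwise extension $\Pi$ such that $\Pi(F(c,s))=\Pi(F(c',s))$ whenever $\Pi(c)=\Pi(c')$, the $\pi$-projection has states $Q'$, random symbols $R$, explicit global function $(c',s)\mapsto\Pi(F(c,s))$ for any $c\in\Pi^{-1}(c')$. Rescaling with $m,t\ge1,k\in\mathbb{Z}$: $\mathcal{A}^{\langle m,t,k\rangle}$ has states $Q^m$, random symbols $(R^m)^t$, explicit global function $b_m\circ\sigma_k\circ F^t(b_m^{-1}(c),b_m^{-1}(s^1),\dots,b_m^{-1}(s^t))$ where $s^i_j=(s_j)_i$, $\sigma_k(c)_z=c_{z+k}$, $b_m(c)_z=(c_{mz},\dots,c_{mz+m-1})$. For $X\in\{S,N\}$: $\mathcal{A}_1\sqsubseteq^X_i\mathcal{A}_2$ (resp. $\sqsubseteq^X_\pi$, $\sqsubseteq^X_m$) iff there are $m_1,m_2,t_1,t_2,k_1,k_2$ such that $\mathcal{A}_1^{\langle m_1,t_1,k_1\rangle}$ has the same stochastic (for $X=S$) or non-deterministic (for $X=N$) global function as some $i$-restriction (resp. some $\pi$-projection, resp. some $\pi$-projection of some $i$-restriction) of $\mathcal{A}_2^{\langle m_2,t_2,k_2\rangle}$. *)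

From mathcomp Require Import all_boot all_order all_algebra.
Set Implicit Arguments. Unset Strict Implicit. Unset Printing Implicit Defensive.
Import Order.TTheory GRing.Theory Num.Theory.
Local Open Scope ring_scope.

(* A stochastic CA (Q,R,V,V',f): V = (v_1..v_r), V' = (v'_1..v'_r') listed as
   sequences of integers, f : Q^r x R^r' -> Q. *)
Record sca := SCA {
  sQ : finType ;
  sR : finType ;
  sV : seq int ;
  sV' : seq int ;
  sf : (size sV).-tuple sQ -> (size sV').-tuple sR -> sQ }.

Definition gdyn (Q R : Type) := (int -> Q) -> (int -> R) -> (int -> Q).

Definition glob (A : sca) : gdyn (sQ A) (sR A) :=
  fun c s z => sf (map_tuple (fun v => c (z + v)) (in_tuple (sV A)))
                  (map_tuple (fun v => s (z + v)) (in_tuple (sV' A))).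
Arguments glob : clear implicits.

(* Iterates: giter F t c ss = F^t(c, ss 0, ..., ss (t-1)), i.e. s^i = ss (i-1). *)
Fixpoint giter (Q R : Type) (F : gdyn Q R) (t : nat) (c : int -> Q)
  (ss : nat -> int -> R) : int -> Q :=
  match t with
  | 0 => c
  | t'.+1 => F (giter F t' c ss) (ss t')
  end.

Definition shift (X : Type) (k : int) (y : int -> X) : int -> X := fun z => y (z + k).

(* b_n with block size n = m.+1 : b(c)_z = (c_{nz}, ..., c_{nz+n-1}) *)
Definition bm (X : Type) (m : nat) (y : int -> X) : int -> {ffun 'I_m.+1 -> X} :=
  fun z => [ffun i : 'I_m.+1 => y (m.+1%:Z * z + (i : nat)%:Z)].

Definition unbm (X : Type) (m : nat) (c : int -> {ffun 'I_m.+1 -> X}) : int -> X :=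
  fun x => c (x %/ m.+1%:Z)%Z (inord (absz (x %% m.+1%:Z)%Z)).

(* Rescaling <m.+1, t.+1, k> (block size m.+1 >= 1, time t.+1 >= 1, shift k):
   states Q^(m+1), random symbols (R^(m+1))^(t+1), global function
   b o sigma_k o F^(t+1)(b^{-1}(c), b^{-1}(s^1), ..., b^{-1}(s^(t+1)))
   where s^i_j = (s_j)_i. *)
Definition rescale_g (Q R : Type) (F : gdyn Q R) (m t : nat) (k : int) :
  gdyn {ffun 'I_m.+1 -> Q} {ffun 'I_t.+1 -> {ffun 'I_m.+1 -> R}} :=
  fun c s => bm m (shift k (giter F t.+1 (unbm c)
                      (fun j => unbm (fun z => s z (inord j))))).
Arguments rescale_g {Q R} F m t k.

Definition rescale (A : sca) (m t : nat) (k : int) :=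
  rescale_g (glob A) m t k.
Arguments rescale : clear implicits.

(* G is the i-restriction of F (i injective, Y = i(Q')^Z invariant,
   G = I^{-1} o F o I). *)
Definition is_restriction (Q Q' R : Type) (i : Q' -> Q) (F : gdyn Q R)
  (G : gdyn Q' R) : Prop :=
  injective i /\
  (forall (c : int -> Q') (s : int -> R) (z : int),
      exists q' : Q', F (fun x => i (c x)) s z = i q') /\
  (forall (c : int -> Q') (s : int -> R) (z : int),
      i (G c s z) = F (fun x => i (c x)) s z).

Definition is_projection (Q Q' R : Type) (pi : Q -> Q') (F : gdyn Q R)
  (G : gdyn Q' R) : Prop :=
  (forall q' : Q', exists q : Q, pi q = q') /\
  (forall (c c' : int -> Q) (s : int -> R),
      (forall x, pi (c x) = pi (c' x)) ->
      forall z, pi (F c s z) = pi (F c' s z)) /\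
  (forall (c : int -> Q) (s : int -> R) (z : int),
      G (fun x => pi (c x)) s z = pi (F c s z)).

Definition Nglob (Q R : Type) (F : gdyn Q R) (c : int -> Q) : (int -> Q) -> Prop :=
  fun y => exists s : int -> R, F c s = y.

Definition sameN (Q R1 R2 : Type) (F : gdyn Q R1) (G : gdyn Q R2) : Prop :=
  forall (c : int -> Q) (y : int -> Q), Nglob F c y <-> Nglob G c y.

Definition fill (R : Type) (s0 : int -> R) (a : int) (L : nat)
  (w : {ffun 'I_L.+1 -> R}) : int -> R :=
  fun x => if (a <= x) && (x <= a + L%:Z) then w (inord (absz (x - a))) else s0 x.

(* Proportion of the random patterns on the window [a-K, a+n-1+K] (filled with
   s0 outside) for which F(c,s) shows pattern p on the cells a, ..., a+n-1.
   For a local F and K at least its radius this is exactly the probability,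
   under the uniform Bernoulli measure, of the cylinder
   {y | y_(a+i) = p_i, i < n} for the law S_F(c). *)
Definition cylfrac (Q R : finType) (F : gdyn Q R) (c : int -> Q) (a : int)
  (n : nat) (p : {ffun 'I_n -> Q}) (K : nat) (s0 : int -> R) : rat :=
  (#|[set w : {ffun 'I_(n + K + K).+1 -> R} |
       [forall i : 'I_n, F c (fill s0 (a - K%:Z) w) (a + (i : nat)%:Z) == p i]]|)%:R
  / (#|R| ^ (n + K + K).+1)%:R.

(* Equality of stochastic global functions: for every configuration c, the
   laws S_F(c) and S_G(c) give the same probability to every cylinder set
   (which determines a probability measure on Q^Z). *)
Definition sameS (Q R1 R2 : finType) (F : gdyn Q R1) (G : gdyn Q R2) : Prop :=
  forall (c : int -> Q) (a : int) (n : nat) (p : {ffun 'I_n -> Q}),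
    exists K0 : nat, forall K : nat, (K0 <= K)%N ->
      forall (s1 : int -> R1) (s2 : int -> R2),
        cylfrac F c a p K s1 = cylfrac G c a p K s2.

Inductive mode := Smode | Nmode.

Definition same (X : mode) (Q R1 R2 : finType) (F : gdyn Q R1) (G : gdyn Q R2) : Prop :=
  match X with Smode => sameS F G | Nmode => sameN F G end.

(* In all three relations, rescaling parameters m_j, t_j >= 1 are written
   m_j.+1, t_j.+1 with m_j, t_j : nat. *)

Definition sim_i (X : mode) (A1 A2 : sca) : Prop :=
  exists (m1 m2 t1 t2 : nat) (k1 k2 : int)
    (i : {ffun 'I_m1.+1 -> sQ A1} -> {ffun 'I_m2.+1 -> sQ A2})
    (G : gdyn {ffun 'I_m1.+1 -> sQ A1} {ffun 'I_t2.+1 -> {ffun 'I_m2.+1 -> sR A2}}),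
    is_restriction i (rescale A2 m2 t2 k2) G /\
    same X (rescale A1 m1 t1 k1) G.

Definition sim_pi (X : mode) (A1 A2 : sca) : Prop :=
  exists (m1 m2 t1 t2 : nat) (k1 k2 : int)
    (pi : {ffun 'I_m2.+1 -> sQ A2} -> {ffun 'I_m1.+1 -> sQ A1})
    (G : gdyn {ffun 'I_m1.+1 -> sQ A1} {ffun 'I_t2.+1 -> {ffun 'I_m2.+1 -> sR A2}}),
    is_projection pi (rescale A2 m2 t2 k2) G /\
    same X (rescale A1 m1 t1 k1) G.

Definition sim_m (X : mode) (A1 A2 : sca) : Prop :=
  exists (m1 m2 t1 t2 : nat) (k1 k2 : int) (Q' : finType)
    (i : Q' -> {ffun 'I_m2.+1 -> sQ A2})
    (G1 : gdyn Q' {ffun 'I_t2.+1 -> {ffun 'I_m2.+1 -> sR A2}})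
    (pi : Q' -> {ffun 'I_m1.+1 -> sQ A1})
    (G : gdyn {ffun 'I_m1.+1 -> sQ A1} {ffun 'I_t2.+1 -> {ffun 'I_m2.+1 -> sR A2}}),
    is_restriction i (rescale A2 m2 t2 k2) G1 /\
    is_projection pi G1 G /\
    same X (rescale A1 m1 t1 k1) G.

(* All the global functions involved are local in the random configuration.
   If y is a non-deterministic image of c under F, every finite window of y has
   positive F-probability, hence positive G-probability, so G produces y on every
   finite window; since the random alphabet is finite, a compactness (Koenig)
   argument glues these partial random configurations into one on which G
   produces all of y.  Restrictions and projections only read off the simulated
   rescaling, so they inherit its locality. *)
From mathcomp Require Import all_boot all_order all_algebra zify.
From Stdlib Require Import Classical ClassicalEpsilon FunctionalExtensionality.
Import Order.TTheory GRing.Theory Num.Theory.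
Set Implicit Arguments. Unset Strict Implicit.
Local Open Scope ring_scope.

Definition local (Q R : Type) (F : gdyn Q R) (r : nat) :=
  forall c c' s s' z,
    (forall x, (absz (x - z) <= r)%N -> c x = c' x /\ s x = s' x) ->
    F c s z = F c' s' z.

Definition rand_local (Q R : Type) (F : gdyn Q R) (r : nat) :=
  forall c s s' z, (forall x, (absz (x - z) <= r)%N -> s x = s' x) ->
    F c s z = F c s' z.

Lemma glob_local (A : sca) : local (glob A) (\max_(v <- sV A ++ sV' A) absz v).
Proof.
have near_z (z v : int) : v \in sV A ++ sV' A ->
    (absz (z + v - z)%R <= \max_(w <- sV A ++ sV' A) absz w)%N.
  by move=> hv; rewrite addrC addKr (big_rem v hv) /= leq_maxl.
move=> c c' s s' z H; rewrite /glob.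
congr sf; apply: val_inj => /=; apply/eq_in_map => v hv.
- by have [] := H _ (near_z z v _); rewrite // mem_cat hv.
- by have [] := H _ (near_z z v _); rewrite // mem_cat hv orbT.
Qed.

Lemma giter_local (Q R : Type) (F : gdyn Q R) r : local F r ->
  forall t c c' ss ss' z,
  (forall x, (absz (x - z) <= t * r)%N ->
     c x = c' x /\ forall j, (j < t)%N -> ss j x = ss' j x) ->
  giter F t c ss z = giter F t c' ss' z.
Proof.
move=> hF; elim=> [|t IH] c c' ss ss' z H /=.
  by have := H z; rewrite subrr => /(_ isT) [].
apply: hF => x hx; split.
  apply: IH => x' hx'.
  have [|h1 h2] := H x'; first by rewrite mulSn; lia.
  by split=> // j hj; apply: h2; lia.
by have [|_ ->] := H x; first by rewrite mulSn; lia.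
Qed.

Lemma absz_divz_sub_le (x z : int) (M : nat) : (0 < M)%N ->
  (absz ((x %/ M%:Z)%Z - z)%R <= absz (x - M%:Z * z)%R)%N.
Proof.
move=> hM; have M0 : M%:Z != 0 by lia.
have := divz_eq x M%:Z; have := modz_ge0 x M0; have := ltz_pmod x (_ : 0 < M%:Z).
move: (x %/ M%:Z)%Z (x %% M%:Z)%Z => q r; nia.
Qed.

Lemma rescale_rand_local A m t k : exists r, rand_local (rescale A m t k) r.
Proof.
set r0 := \max_(v <- sV A ++ sV' A) absz v.
exists (t.+1 * r0 + m.+1 + absz k)%N => c s s' z H.
rewrite /rescale /rescale_g /bm; apply/ffunP => i; rewrite !ffunE /shift.
apply: (giter_local (@glob_local A)) => x hx; split=> // j _.
rewrite /unbm H //; apply: leq_trans (absz_divz_sub_le x z (ltn0Sn m)) _.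
by have := ltn_ord i; move: hx; rewrite -/r0; lia.
Qed.

Lemma restriction_rand_local (Q Q' R : Type) (i : Q' -> Q) F (G : gdyn Q' R) r :
  is_restriction i F G -> rand_local F r -> rand_local G r.
Proof.
by move=> [i_inj [_ iG]] hF c s s' z H; apply: i_inj; rewrite !iG; apply: hF.
Qed.

Lemma projection_rand_local (Q Q' R : Type) (pi : Q -> Q') F (G : gdyn Q' R) r :
  is_projection pi F G -> rand_local F r -> rand_local G r.
Proof.
move=> [pi_surj [_ Gpi]] hF c' s s' z H.
have [pre preK] : {pre : Q' -> Q | forall q', pi (pre q') = q'}.
  exists (fun q' => proj1_sig (constructive_indefinite_description _ (pi_surj q'))).
  by move=> q'; exact: proj2_sig (constructive_indefinite_description _ (pi_surj q')).
have -> : c' = (fun x => pi (pre (c' x))).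
  by apply: functional_extensionality => x; rewrite preK.
by rewrite !Gpi; congr pi; apply: hF.
Qed.

Section Compactness.
Variables (Q R : finType) (G : gdyn Q R) (r : nat) (c y : int -> Q).
Hypothesis G_local : rand_local G r.

Definition extendable (N : nat) (u : int -> R) := forall M : nat, exists s,
  (forall z, (absz z < N)%N -> s z = u z) /\
  (forall z, (absz z <= M)%N -> G c s z = y z).

Definition set_ends (N : nat) (u : int -> R) (a b : R) : int -> R :=
  fun z => if z == N%:Z then b else if z == - N%:Z then a else u z.

(* Pigeonhole over the finitely many values at -N and N: if no choice stays
   extendable, each fails beyond some M, and their maximum contradicts
   extendability of u. *)
Lemma extendable_succ N u : extendable N u ->
  exists u', extendable N.+1 u' /\ forall z, (absz z < N)%N -> u' z = u z.
Proof.
move=> hu; apply: NNPP => no_ext.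
have fails ab : exists M : nat, ~ exists s,
    (forall z, (absz z < N.+1)%N -> s z = set_ends N u ab.1 ab.2 z) /\
    (forall z, (absz z <= M)%N -> G c s z = y z).
  apply: not_all_ex_not => ext_ab; apply: no_ext.
  exists (set_ends N u ab.1 ab.2); split=> // z hz.
  by rewrite /set_ends; case: eqP => [?|_]; [lia | case: eqP => [?|//]; lia].
have [Mf hMf] : {Mf : R * R -> nat | forall ab, ~ exists s,
    (forall z, (absz z < N.+1)%N -> s z = set_ends N u ab.1 ab.2 z) /\
    (forall z, (absz z <= Mf ab)%N -> G c s z = y z)}.
  exists (fun ab => proj1_sig (constructive_indefinite_description _ (fails ab))).
  by move=> ab; exact: proj2_sig (constructive_indefinite_description _ (fails ab)).
have [s [su sy]] := hu (\max_(ab : R * R) Mf ab)%N.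
apply: (hMf (s (- N%:Z), s N%:Z)); exists s; split.
  by move=> z hz; rewrite /set_ends /=; do 2 case: eqP => [->|?] //; apply: su; lia.
move=> z hz; apply: sy; apply: leq_trans hz _; exact: (leq_bigmax (_, _)).
Qed.

Definition extend N (u : int -> R) : int -> R :=
  epsilon (inhabits u)
    (fun u' => extendable N.+1 u' /\ forall z, (absz z < N)%N -> u' z = u z).

Fixpoint approx (u0 : int -> R) (N : nat) : int -> R :=
  if N is N'.+1 then extend N' (approx u0 N') else u0.

Hypothesis y_on_windows :
  forall M : nat, exists s, forall z, (absz z <= M)%N -> G c s z = y z.

Lemma approx_extendable u0 N : extendable N (approx u0 N) /\
  forall z, (absz z < N)%N -> approx u0 N.+1 z = approx u0 N z.
Proof.
elim: N => [|N [hN _]].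
  by split=> // M; have [s hs] := y_on_windows M; exists s.
have [hN1 _] := epsilon_spec (inhabits (approx u0 N)) _ (extendable_succ hN).
by split=> //; have [] := epsilon_spec (inhabits (approx u0 N.+1)) _ (extendable_succ hN1).
Qed.

Lemma approx_stable u0 d N z : (absz z < N)%N -> approx u0 (N + d) z = approx u0 N z.
Proof.
move=> hz; elim: d => [|d IH]; first by rewrite addn0.
by rewrite addnS (proj2 (approx_extendable _ _)) //; lia.
Qed.

Lemma image_of_windows : exists s, G c s = y.
Proof.
have [u0 _] := y_on_windows 0.
pose s z := approx u0 (absz z).+1 z.
have s_approx N z : (absz z < N)%N -> s z = approx u0 N z.
  move=> hz; rewrite /s -(approx_stable _ (N - (absz z).+1)) //.
  by congr approx; lia.
exists s; apply: functional_extensionality => z.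
pose N := (absz z + r + 1)%N.
have [s' [s'_approx s'y]] := proj1 (approx_extendable u0 N) (absz z).
rewrite -(s'y z (leqnn _)); transitivity (G c (approx u0 N) z).
  by apply: G_local => x hx; apply: s_approx; lia.
by apply: G_local => x hx; rewrite s'_approx //; lia.
Qed.

End Compactness.

Lemma fill_window (R : Type) (s : int -> R) (a : int) (L : nat) :
  fill s a [ffun j : 'I_L.+1 => s (a + (j : nat)%:Z)] = s.
Proof.
apply: functional_extensionality => x; rewrite /fill.
case: ifP => // /andP [h1 h2]; rewrite ffunE inordK; last by lia.
by congr s; lia.
Qed.

Lemma cylfrac_gt0 (Q R : finType) (F : gdyn Q R) c a n (p : {ffun 'I_n -> Q}) K s :
  (forall i : 'I_n, F c s (a + (i : nat)%:Z) = p i) -> 0 < cylfrac F c a p K s.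
Proof.
move=> hs; rewrite /cylfrac divr_gt0 // ltr0n; last first.
  by rewrite expn_gt0; apply/orP; left; apply/card_gt0P; exists (s 0).
apply/card_gt0P; exists [ffun j : 'I_(n + K + K).+1 => s (a - K%:Z + (j : nat)%:Z)].
by rewrite inE fill_window; apply/forallP => i; rewrite hs.
Qed.

Lemma cylfrac_gt0_realized (Q R : finType) (F : gdyn Q R) c a n
    (p : {ffun 'I_n -> Q}) K s0 :
  0 < cylfrac F c a p K s0 ->
  exists s, forall i : 'I_n, F c s (a + (i : nat)%:Z) = p i.
Proof.
rewrite /cylfrac; set W := [set w | _].
have [->|/card_gt0P [w]] := posnP #|W|; first by rewrite mul0r ltxx.
by rewrite inE => /forallP hw; exists (fill s0 (a - K%:Z) w) => i; apply/eqP.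
Qed.

Lemma sameS_sym (Q R1 R2 : finType) (F : gdyn Q R1) (G : gdyn Q R2) :
  sameS F G -> sameS G F.
Proof.
move=> hS c a n p; have [K0 hK] := hS c a n p.
by exists K0 => K hK0 s1 s2; rewrite (hK K hK0 s2 s1).
Qed.

Lemma sameS_windows (Q R1 R2 : finType) (F : gdyn Q R1) (G : gdyn Q R2) c y :
  (0 < #|R2|)%N -> sameS F G -> Nglob F c y ->
  forall M : nat, exists s, forall z, (absz z <= M)%N -> G c s z = y z.
Proof.
move=> /card_gt0P [e _] hS [s <-] M.
pose p := [ffun i : 'I_(M + M).+1 => F c s (- M%:Z + (i : nat)%:Z)].
have [K0 hK] := hS c (- M%:Z) _ p.
have hF : 0 < cylfrac F c (- M%:Z) p K0 s by apply: cylfrac_gt0 => i; rewrite ffunE.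
rewrite (hK K0 (leqnn _) s (fun _ => e)) in hF.
have [s' hs'] := cylfrac_gt0_realized hF.
exists s' => z hz; have hi : (absz (z + M%:Z)%R < (M + M).+1)%N by lia.
have := hs' (Ordinal hi); rewrite ffunE /=.
by have -> : - M%:Z + (absz (z + M%:Z))%:Z = z by lia.
Qed.

Lemma sameS_sameN (Q R1 R2 : finType) (F : gdyn Q R1) (G : gdyn Q R2) rF rG :
  rand_local F rF -> rand_local G rG -> (0 < #|R1|)%N -> (0 < #|R2|)%N ->
  sameS F G -> sameN F G.
Proof.
move=> hF hG hR1 hR2 hS c y; split=> hy.
  by have [s] := image_of_windows hG (sameS_windows hR2 hS hy); exists s.
by have [s] := image_of_windows hF (sameS_windows hR1 (sameS_sym hS) hy); exists s.
Qed.

Lemma card_ffun_gt0 (I T : finType) : (0 < #|T|)%N -> (0 < #|{ffun I -> T}|)%N.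
Proof. by move=> hT; rewrite card_ffun expn_gt0 hT. Qed.

Lemma rescale_sameS_sameN (A : sca) m t k (R : finType)
    (G : gdyn {ffun 'I_m.+1 -> sQ A} R) r :
  (0 < #|sR A|)%N -> (0 < #|R|)%N -> rand_local G r ->
  sameS (rescale A m t k) G -> sameN (rescale A m t k) G.
Proof.
move=> hA hR hG; have [rA hF] := rescale_rand_local A m t k.
by apply: sameS_sameN hF hG _ hR; do 2 apply: card_ffun_gt0.
Qed.

Theorem fact4 (A1 A2 : sca) (hR1 : (0 < #|sR A1|)%N) (hR2 : (0 < #|sR A2|)%N) :
  (sim_i Smode A1 A2 -> sim_i Nmode A1 A2) /\
  (sim_pi Smode A1 A2 -> sim_pi Nmode A1 A2) /\
  (sim_m Smode A1 A2 -> sim_m Nmode A1 A2).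
Proof.
have hR2' t m : (0 < #|{ffun 'I_t.+1 -> {ffun 'I_m.+1 -> sR A2}}|)%N.
  by do 2 apply: card_ffun_gt0.
split; [|split].
- move=> [m1 [m2 [t1 [t2 [k1 [k2 [i [G [hi hS]]]]]]]]].
  exists m1, m2, t1, t2, k1, k2, i, G; split=> //.
  have [r hr] := rescale_rand_local A2 m2 t2 k2.
  exact: rescale_sameS_sameN hR1 (hR2' _ _) (restriction_rand_local hi hr) hS.
- move=> [m1 [m2 [t1 [t2 [k1 [k2 [pi [G [hpi hS]]]]]]]]].
  exists m1, m2, t1, t2, k1, k2, pi, G; split=> //.
  have [r hr] := rescale_rand_local A2 m2 t2 k2.
  exact: rescale_sameS_sameN hR1 (hR2' _ _) (projection_rand_local hpi hr) hS.
- move=> [m1 [m2 [t1 [t2 [k1 [k2 [Q' [i [G1 [pi [G [hi [hpi hS]]]]]]]]]]]]].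
  exists m1, m2, t1, t2, k1, k2, Q', i, G1, pi, G; split=> //; split=> //.
  have [r hr] := rescale_rand_local A2 m2 t2 k2.
  apply: rescale_sameS_sameN hR1 (hR2' _ _) _ hS.
  exact: projection_rand_local hpi (restriction_rand_local hi hr).
Qed.
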